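(* Let $k > d \geq 1$ be integers. There is a function $f = f_{k,d} : \mathbb{N} \to \mathbb{R}$ with $f(N) \to 0$ as $N \to \infty$ such that for every even positive integer $n$, setting $N = (k-1)n - k + 2$, there exists an $N$-vertex $k$-graph $H$ with $\delta_d(H) \geq (1/2 - f(N)) \binom{N-d}{k-d}$ that does not contain the $k$-expansion of any $n$-vertex tree all of whose vertex degrees are odd.
   Context: A $k$-graph is a $k$-uniform hypergraph. For a $k$-graph $H$ and $S \subseteq V(H)$, $\deg_H(S)$ is the number of edges containing $S$, and $\delta_d(H)$ is the minimum of $\deg_H(S)$ over all $d$-subsets $S \subseteq V(H)$. The $k$-expansion $T^{(k)}$ of a graph $T$ is the $k$-graph obtained by replacing each edge $uv$ of $T$ by a $k$-edge consisting of $u$, $v$ and $k-2$ new vertices that belong to no other edge. ''Contain'' means as a (not necessarily induced) subgraph. *)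

From Stdlib Require Import Reals.
From Coquelicot Require Import Coquelicot.
From mathcomp Require Import all_boot.
Local Open Scope nat_scope.
Set Implicit Arguments. Unset Strict Implicit. Unset Printing Implicit Defensive.

Definition uniform (V : finType) (k : nat) (E : {set {set V}}) : Prop :=
  forall e, e \in E -> #|e| = k.

Definition hdeg (V : finType) (E : {set {set V}}) (S : {set V}) : nat :=
  #|[set e in E | S \subset e]|.

Definition graph_adj (T : finType) (G : {set {set T}}) : rel T :=
  fun x y => [set x; y] \in G.

Definition is_tree (T : finType) (G : {set {set T}}) : Prop :=
  (forall e, e \in G -> #|e| = 2) /\
  (forall x y : T, connect (graph_adj G) x y) /\
  #|G| = #|T| - 1.

Definition gdeg (T : finType) (G : {set {set T}}) (x : T) : nat :=
  #|[set e in G | x \in e]|.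

(* The k-expansion of G: each edge e = {u,v} becomes e together with k-2 new
   vertices (inr (e,i)), i < k-2, belonging to no other edge. *)
Definition expansion_vertex (T : finType) (k : nat) : finType :=
  (T + ({set T} * 'I_(k - 2)))%type.

Definition expansion (T : finType) (k : nat) (G : {set {set T}})
  : {set {set expansion_vertex T k}} :=
  [set (@inl T ({set T} * 'I_(k - 2)) @: e) :|:
       [set (inr (e, i) : expansion_vertex T k) | i : 'I_(k - 2)]
     | e : {set T} in G].

(* H contains F (not necessarily induced): an injective map of the vertices of F
   (those covered by its edges) into V(H) sending edges of F to edges of H. *)
Definition contains (U V : finType) (F : {set {set U}}) (H : {set {set V}}) : Prop :=
  exists g : U -> V,
    {in cover F &, injective g} /\ (forall e, e \in F -> g @: e \in H).

(* Pair up all but at most three of the N vertices, let A contain one vertex of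
   each pair (with |A| even), and take for H the k-sets meeting A in an odd number
   of vertices.  The expansion of an n-vertex tree has exactly N vertices, so a
   copy of it is a bijection onto V(H); counting incidences between its edges and
   the preimage of A gives |E(T)| = sum of the degrees over the preimage = |A|
   (mod 2) when all degrees are odd, while |E(T)| = n - 1 is odd.
   For a d-set S, toggling the first pair that avoids S and meets a k-set
   e containing S in exactly one vertex changes the parity of |e :&: A|; this is an
   involution on the k-sets containing S.  The k-sets for which no such pair exists
   contain S together with a vertex off the pairs or next to S, or S together with a
   whole pair, and there are O(1/N) C(N - d, k - d) of them. *)

From Stdlib Require Import Reals Lra.
From Coquelicot Require Import Coquelicot.
From mathcomp Require Import all_boot zify.
Set Implicit Arguments. Unset Strict Implicit. Unset Printing Implicit Defensive.
Open Scope nat_scope.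

Lemma odd_sum_odd (I : finType) (J : {pred I}) (F : I -> nat) :
  (forall i, i \in J -> odd (F i)) -> odd (\sum_(i in J) F i) = odd #|J|.
Proof.
move=> oddF; rewrite -sum1_card.
by apply: (big_ind2 (fun a b => odd a = odd b)) => // a b c e ab ce; rewrite !oddD ab ce.
Qed.

Lemma card_bigcup_le (T I : finType) (J : {pred I}) (B : I -> {set T}) :
  #|\bigcup_(i in J) B i| <= \sum_(i in J) #|B i|.
Proof.
elim/big_ind2: _ => [|U1 s1 U2 s2 le1 le2|//]; first by rewrite cards0.
by rewrite cardsU (leq_trans (leq_subr _ _)) ?leq_add.
Qed.

Lemma card_bigcup_disjoint (T I : finType) (B : I -> {set T}) :
  (forall i j, i != j -> [disjoint B i & B j]) ->
  #|\bigcup_i B i| = \sum_i #|B i|.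
Proof.
move=> disjB.
have one_block v : v \in \bigcup_i B i -> \sum_i (v \in B i) = 1.
  case/bigcupP=> i _ vBi; rewrite (bigD1 i) //= vBi big1 // => j ji.
  by rewrite (disjointFl (disjB _ _ ji) vBi).
rewrite -sum1_card (eq_bigr _ (fun v vB => esym (one_block v vB))).
transitivity (\sum_v \sum_i (v \in B i : nat)).
  rewrite [RHS](bigID (mem (\bigcup_i B i))) /= [X in _ + X]big1 ?addn0 // => v nvB.
  apply: big1 => i _; apply/eqP; rewrite eqb0; apply: contra nvB => vBi.
  by apply/bigcupP; exists i.
rewrite exchange_big; apply: eq_bigr => i _.
by rewrite -sum1_card [RHS]big_mkcond; apply: eq_bigr => v _; case: (v \in B i).
Qed.

Lemma card_set_sum (T : finType) (A : {pred T}) (p : pred T) :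
  #|[set x in A | p x]| = \sum_(x in A) p x.
Proof.
rewrite -sum1_card big_mkcond [RHS]big_mkcond /=; apply: eq_bigr => x _.
by rewrite !inE; case: (x \in A); case: (p x).
Qed.

Section SymmetricDifference.
Variable T : finType.
Implicit Types A B C : {set T}.

Definition symdiff A B : {set T} := [set x | (x \in A) (+) (x \in B)].

Lemma symdiffK A B : symdiff (symdiff A B) B = A.
Proof. by apply/setP=> x; rewrite !inE addbK. Qed.

Lemma setI_symdiff A B C : symdiff A B :&: C = symdiff (A :&: C) (B :&: C).
Proof. by apply/setP=> x; rewrite !inE; case: (x \in C); rewrite ?andbF ?andbT. Qed.

Lemma card_symdiff A B : #|symdiff A B| + 2 * #|A :&: B| = #|A| + #|B|.
Proof.
rewrite -!sum1_card mul2n -addnn !(big_mkcond (fun x => x \in _)) -!big_split /=.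
by apply: eq_bigr => x _; rewrite !inE; case: (x \in A); case: (x \in B).
Qed.

Lemma odd_card_symdiff A B : odd #|symdiff A B| = odd #|A| (+) odd #|B|.
Proof. by rewrite -oddD -card_symdiff oddD oddM addbF. Qed.

End SymmetricDifference.

Definition supsets (T : finType) (k : nat) (S : {set T}) : {set {set T}} :=
  [set e : {set T} | S \subset e & #|e| == k].

Definition nsupsets (n k t : nat) : nat := if t <= k then 'C(n - t, k - t) else 0.

Lemma card_supsets (T : finType) (k : nat) (S : {set T}) :
  #|supsets k S| = nsupsets #|T| k #|S|.
Proof.
rewrite /nsupsets; case: leqP => [leSk | ltkS]; last first.
  by apply: eq_card0 => e; rewrite inE; apply/negP => /andP[/subset_leq_card]; lia.
set D := [set X : {set T} | X \subset ~: S & #|X| == k - #|S|].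
have -> : supsets k S = (fun X => X :|: S) @: D.
  apply/setP => e; rewrite inE; apply/andP/imsetP => [[Se /eqP ke] | [X]].
    exists (e :\: S); first by rewrite inE subsetDr cardsDS // ke eqxx.
    apply/setP=> x; rewrite !inE.
    by case: (boolP (x \in S)) => /= [/(subsetP Se) ->|_]; rewrite ?orbF.
  rewrite inE -disjoints_subset => /andP[XS /eqP kX] ->.
  by rewrite subsetUr cardsU (disjoint_setI0 XS) cards0 subn0 kX subnK.
rewrite card_in_imset ?cards_draws.
  by rewrite cardsCs setCK.
move=> X Y; rewrite !inE -!disjoints_subset => /andP[XS _] /andP[YS _] XY.
have DS Z : (Z :|: S) :\: S = Z :\: S by rewrite setDUl setDv setU0.
by rewrite -(setDidPl XS) -(setDidPl YS) -DS XY DS.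
Qed.

Lemma nsupsetsS (n k t : nat) :
  (n - t) * nsupsets n k t.+1 = (k - t) * nsupsets n k t.
Proof.
rewrite /nsupsets; case: (ltnP t k) => [ltk | lekt].
  by rewrite ltnW // subnS mul_bin_diag subnSK.
by move: lekt; rewrite -subn_eq0 => /eqP ->; rewrite muln0.
Qed.

Lemma sum_card_setI_gdeg (U : finType) (F : {set {set U}}) (X : {set U}) :
  \sum_(e in F) #|e :&: X| = \sum_(u in X) gdeg F u.
Proof.
transitivity (\sum_(e in F) \sum_(u in X) (u \in e : nat)).
  apply: eq_bigr => e _; rewrite -card_set_sum; apply: eq_card => u.
  by rewrite !inE andbC.
by rewrite exchange_big; apply: eq_bigr => u _; rewrite /gdeg card_set_sum.
Qed.

Lemma odd_card_edges_parity (U V : finType) (F : {set {set U}}) (A : {set V})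
    (g : U -> V) :
  {in cover F &, injective g} -> g @: cover F = [set: V] ->
  (forall u, u \in cover F -> odd (gdeg F u)) ->
  (forall e, e \in F -> odd #|g @: e :&: A|) ->
  odd #|F| = odd #|A|.
Proof.
move=> ginj gonto odd_deg odd_edge.
set C := cover F; set X := C :&: g @^-1: A.
have XC : X \subset C := subsetIl _ _.
have edgeC e : e \in F -> e \subset C by move=> eF; apply: bigcup_sup.
have card_image (Y : {set U}) : Y \subset C -> #|g @: Y| = #|Y|.
  move=> YC; rewrite card_in_imset // => u v /(subsetP YC) uC /(subsetP YC).
  exact: ginj.
have cardX : #|X| = #|A|.
  rewrite -(card_image _ XC); apply: eq_card => w; apply/imsetP/idP.
    by case=> u; rewrite !inE => /andP[_ ?] ->.
  have : w \in g @: C by rewrite gonto.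
  by case/imsetP=> u uC -> gu; exists u; rewrite // !inE uC.
have edgeX e : e \in F -> #|g @: e :&: A| = #|e :&: X|.
  move=> eF; have eC := edgeC e eF.
  rewrite -(card_image _ (subset_trans (subsetIl _ _) eC)); apply: eq_card => w.
  apply/setIP/imsetP.
    by case=> /imsetP[u ue ->] guA; exists u; rewrite // !inE ue (subsetP eC).
  by case=> u; rewrite !inE => /and3P[ue _ guA] ->; rewrite imset_f.
rewrite -(odd_sum_odd odd_edge) (eq_bigr _ edgeX) sum_card_setI_gdeg -cardX.
by apply: odd_sum_odd => u /(subsetP XC); apply: odd_deg.
Qed.

Section Expansion.
Variables (T : finType) (k : nat).
Implicit Types (G : {set {set T}}) (e : {set T}).

Definition expansion_edge e : {set expansion_vertex T k} :=
  inl @: e :|: [set inr (e, i) | i : 'I_(k - 2)].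

Lemma inl_expansion_edge e x : (inl x \in expansion_edge e) = (x \in e).
Proof.
rewrite !inE (mem_imset _ _ (@inl_inj _ _)).
by case: (x \in e) => //=; apply/imsetP; case.
Qed.

Lemma inr_expansion_edge e e' i : (inr (e', i) \in expansion_edge e) = (e' == e).
Proof.
rewrite !inE; apply/orP/eqP => [[/imsetP[] // | /imsetP[j _ [-> _]]] // | ->].
by right; apply: imset_f.
Qed.

Lemma expansion_edge_inj : injective expansion_edge.
Proof. by move=> e1 e2 E; apply/setP=> x; rewrite -!inl_expansion_edge E. Qed.

Lemma card_expansion G : #|expansion k G| = #|G|.
Proof. exact/card_imset/expansion_edge_inj. Qed.

Lemma gdeg_expansion_inl G x : gdeg (expansion k G) (inl x) = gdeg G x.
Proof.
rewrite /gdeg -(card_imset _ expansion_edge_inj); apply: eq_card => E.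
rewrite inE; apply/andP/imsetP => [[/imsetP[e eG ->]] | [e]].
  by rewrite inl_expansion_edge => xe; exists e; rewrite // inE eG.
by rewrite inE => /andP[eG xe] ->; rewrite imset_f ?inl_expansion_edge.
Qed.

Lemma gdeg_expansion_inr G e i : e \in G -> gdeg (expansion k G) (inr (e, i)) = 1.
Proof.
move=> eG; rewrite /gdeg -[RHS](cards1 (expansion_edge e)); apply: eq_card => E.
rewrite !inE; apply/andP/eqP => [[/imsetP[e' _ ->]] | ->].
  by rewrite inr_expansion_edge => /eqP ->.
by rewrite imset_f ?inr_expansion_edge.
Qed.

Lemma cover_expansion G :
  cover (expansion k G) = inl @: cover G :|: inr @: setX G [set: 'I_(k - 2)].
Proof.
apply/setP=> -[x | [e i]]; rewrite inE /cover.
  have -> : (inl x \in inr @: setX G [set: 'I_(k - 2)]) = false by apply/imsetP; case.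
  rewrite orbF (mem_imset _ _ (@inl_inj _ _)).
  apply/bigcupP/bigcupP => [[_ /imsetP[e eG ->]] | [e eG xe]].
    by rewrite inl_expansion_edge => xe; exists e.
  by exists (expansion_edge e); rewrite ?imset_f ?inl_expansion_edge.
have -> : (inr (e, i) \in inl @: \bigcup_(B in G) B) = false by apply/imsetP; case.
rewrite (mem_imset _ _ (@inr_inj _ _)) !inE andbT.
apply/bigcupP/idP => [[_ /imsetP[e' e'G ->]] | eG].
  by rewrite inr_expansion_edge => /eqP ->.
by exists (expansion_edge e); rewrite ?imset_f ?inr_expansion_edge.
Qed.

Lemma card_cover_expansion G :
  #|cover (expansion k G)| = #|cover G| + #|G| * (k - 2).
Proof.
rewrite cover_expansion cardsU disjoint_setI0 ?cards0 ?subn0.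
  by rewrite !card_imset ?cardsX ?cardsT ?card_ord //; [apply: inr_inj | apply: inl_inj].
rewrite -setI_eq0; apply/eqP/setP=> v; rewrite !inE.
by apply/andP=> -[/imsetP[? _ ->] /imsetP[]].
Qed.

End Expansion.

Definition odd_hypergraph (V : finType) (k : nat) (A : {set V}) : {set {set V}} :=
  [set e : {set V} | (#|e| == k) && odd #|e :&: A|].

Lemma expansion_not_contained (T V : finType) (k : nat) (G : {set {set T}})
    (A : {set V}) :
  (forall x, odd (gdeg G x)) -> odd #|G| -> ~~ odd #|A| ->
  #|V| <= #|T| + #|G| * (k - 2) ->
  ~ contains (expansion k G) (odd_hypergraph k A).
Proof.
move=> odd_deg oddG evenA cardV [g [ginj gH]].
have coverG : cover G = [set: T].
  apply/setP=> x; rewrite inE; move: (odd_deg x) => /odd_gt0/card_gt0P[e].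
  by rewrite inE => /andP[eG xe]; apply/bigcupP; exists e.
have gonto : g @: cover (expansion k G) = [set: V].
  apply/eqP; rewrite eqEcard subsetT cardsT card_in_imset //.
  by rewrite card_cover_expansion coverG cardsT.
have odd_deg_exp u : u \in cover (expansion k G) -> odd (gdeg (expansion k G) u).
  case: u => [x _ | [e i]]; first by rewrite gdeg_expansion_inl.
  rewrite cover_expansion => /setUP[/imsetP[] // | /imsetP[[e' i'] + [-> _]]].
  by rewrite inE => /andP[e'G _]; rewrite gdeg_expansion_inr.
have odd_edge e : e \in expansion k G -> odd #|g @: e :&: A|.
  by move/gH; rewrite inE => /andP[].
move: (odd_card_edges_parity ginj gonto odd_deg_exp odd_edge).
by rewrite card_expansion oddG => oddA; rewrite -oddA in evenA.
Qed.

(* Fails for n = 1, where (k - 1) - k truncates to 0. *)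
Lemma expansion_order (n k : nat) : 2 <= k -> 1 < n ->
  (k - 1) * n - k + 2 = n + (n - 1) * (k - 2).
Proof.
case: k => [|[|a]] // _; case: n => [|m] // lt1m.
have -> : a.+2 - 1 = a.+1 by lia.
have -> : m.+1 - 1 = m by lia.
have -> : a.+2 - 2 = a by lia.
rewrite mulSn mulnS [m * a]mulnC; lia.
Qed.

Section PairSwitching.
Variables (V I : finType) (P : I -> {set V}) (A S : {set V}).
Hypothesis card_pair : forall j, #|P j| = 2.
Hypothesis pair_disjoint : forall i j, i != j -> [disjoint P i & P j].
Hypothesis card_pairIA : forall j, #|P j :&: A| = 1.
Implicit Types (e X : {set V}) (i j : I).

Lemma card_cover_pairs : #|\bigcup_j P j| = 2 * #|I|.
Proof.
rewrite card_bigcup_disjoint //.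
by under eq_bigr do rewrite card_pair; rewrite sum_nat_const mulnC.
Qed.

Lemma card_bigcup_pairsI X : #|\bigcup_j (P j :&: X)| = \sum_j #|P j :&: X|.
Proof.
apply: card_bigcup_disjoint => i j /pair_disjoint.
exact: disjointW (subsetIl _ _) (subsetIl _ _).
Qed.

Lemma card_pairs_transversal : A \subset \bigcup_j P j -> #|A| = #|I|.
Proof.
move=> AP; have -> : A = \bigcup_j (P j :&: A).
  apply/setP=> v; apply/idP/bigcupP => [vA | [j _ /setIP[]//]].
  by case/bigcupP: (subsetP AP v vA) => j _ vP; exists j; rewrite ?inE ?vP.
rewrite card_bigcup_pairsI.
by under eq_bigr do rewrite card_pairIA; rewrite sum_nat_const muln1.
Qed.

Definition switchable e j : bool := (#|e :&: P j| == 1) && [disjoint P j & S].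

Definition switch e : {set V} :=
  if [pick j | switchable e j] is Some j then symdiff e (P j) else e.

Definition unswitchable k : {set {set V}} :=
  [set e in supsets k S | ~~ [exists j, switchable e j]].

Lemma switchable_symdiff e j0 :
  switchable e j0 -> switchable (symdiff e (P j0)) =1 switchable e.
Proof.
case/andP=> /eqP eP1 _ j; rewrite /switchable setI_symdiff; congr (_ && _).
have [<-|ne] := eqVneq j0 j.
  have := card_symdiff (e :&: P j0) (P j0).
  by rewrite -setIA !setIid eP1 card_pair eqxx => /eqP; rewrite -eqSS; lia.
rewrite (disjoint_setI0 (pair_disjoint ne)).
by have -> : symdiff (e :&: P j) set0 = e :&: P j by apply/setP=> v; rewrite !inE addbF.
Qed.

Lemma switchK : involutive switch.
Proof.
move=> e; rewrite {2}/switch; case E: [pick j | switchable e j] => [j0|]; last first.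
  by rewrite /switch E.
have sw0 : switchable e j0 by move: E; case: pickP => // j ? [<-].
by rewrite /switch (eq_pick (switchable_symdiff sw0)) E symdiffK.
Qed.

Lemma card_switch e : #|switch e| = #|e|.
Proof.
rewrite /switch; case: pickP => // j /andP[/eqP eP1 _].
by have := card_symdiff e (P j); rewrite eP1 card_pair; lia.
Qed.

Lemma subset_switch e : S \subset e -> S \subset switch e.
Proof.
rewrite /switch; case: pickP => // j /andP[_ PS] Se.
by apply/subsetP=> v vS; rewrite inE (subsetP Se) // (disjointFl PS vS).
Qed.

Lemma odd_switch e :
  [exists j, switchable e j] -> odd #|switch e :&: A| = ~~ odd #|e :&: A|.
Proof.
rewrite /switch; case: pickP => [j _ _ | none /existsP[j]]; last by rewrite none.
by rewrite setI_symdiff odd_card_symdiff card_pairIA addbT.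
Qed.

Lemma card_supsets_switch k :
  #|supsets k S| <= 2 * hdeg (odd_hypergraph k A) S + #|unswitchable k|.
Proof.
set Q := supsets k S; set B := unswitchable k; set O := [set e in Q | odd #|e :&: A|].
have -> : hdeg (odd_hypergraph k A) S = #|O|.
  by apply: eq_card => e; rewrite !inE andbC andbA.
have even_to_odd : #|Q :\: O :\: B| <= #|O|.
  rewrite -(card_imset _ (can_inj switchK)); apply/subset_leq_card/subsetP.
  move=> _ /imsetP[e + ->]; rewrite !inE => /and3P[notB notO /andP[Se ke]].
  move: notB notO; rewrite Se ke /= negbK => sw ev.
  by rewrite subset_switch // card_switch ke odd_switch.
rewrite -(cardsID O Q) -(cardsID B (Q :\: O)).
have := subset_leq_card (subsetIr Q O); have := subset_leq_card (subsetIr (Q :\: O) B).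
lia.
Qed.

Definition blocked : {set V} :=
  [set v | (v \notin S) && [forall j, (v \in P j) ==> ~~ [disjoint P j & S]]].

Lemma unswitchable_sub k : #|S| < k ->
  unswitchable k \subset
  (\bigcup_(v in blocked) supsets k (v |: S)) :|:
  \bigcup_(j | [disjoint P j & S]) supsets k (P j :|: S).
Proof.
move=> ltSk; apply/subsetP=> e; rewrite !inE => /andP[/andP[Se /eqP ke] /existsPn stuck].
have /card_gt0P[v] : 0 < #|e :&: ~: S| by rewrite -setDE cardsDS // ke subn_gt0.
rewrite !inE => /andP[ve vS].
case: (boolP [forall j, (v \in P j) ==> ~~ [disjoint P j & S]]) => [vb | /forallPn[j]].
  apply/orP; left; apply/bigcupP; exists v; first by rewrite inE vS vb.
  by rewrite inE subUset sub1set ve Se ke eqxx.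
rewrite negb_imply negbK => /andP[vP PS].
apply/orP; right; apply/bigcupP; exists j => //.
rewrite inE subUset Se ke eqxx !andbT /=.
have := stuck j; rewrite /switchable PS andbT => ne1.
have : 0 < #|e :&: P j| by apply/card_gt0P; exists v; rewrite inE ve vP.
have : #|e :&: P j| <= #|P j| by rewrite subset_leq_card // subsetIr.
rewrite card_pair => le2 gt0; have <- : e :&: P j = P j.
  by apply/eqP; rewrite eqEcard subsetIr card_pair; lia.
exact: subsetIl.
Qed.

Lemma card_unswitchable k : #|S| < k ->
  #|unswitchable k| <=
  #|blocked| * nsupsets #|V| k #|S|.+1 + #|I| * nsupsets #|V| k #|S|.+2.
Proof.
move=> ltSk; apply: leq_trans (subset_leq_card (unswitchable_sub ltSk)) _.
rewrite cardsU (leq_trans (leq_subr _ _)) // leq_add //.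
  apply: leq_trans (card_bigcup_le _ _) _; rewrite -sum_nat_const leq_sum // => v.
  by rewrite /blocked inE => /andP[vS _]; rewrite card_supsets cardsU1 vS.
apply: leq_trans (card_bigcup_le _ _) _.
apply: (@leq_trans (\sum_j nsupsets #|V| k #|S|.+2)); last first.
  by rewrite sum_nat_const; apply: leqnn.
rewrite big_mkcond leq_sum // => j _; case: ifP => // PS.
by rewrite card_supsets cardsU (disjoint_setI0 PS) card_pair cards0 subn0 add2n.
Qed.

Lemma card_blocked : #|blocked| <= #|~: \bigcup_j P j| + 2 * #|S|.
Proof.
set M := [set j | ~~ [disjoint P j & S]].
have blocked_sub : blocked \subset (~: \bigcup_j P j) :|: \bigcup_(j in M) P j.
  apply/subsetP=> v; rewrite !inE => /andP[_ /forallP vb].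
  case: (boolP (v \in \bigcup_j P j)) => //= /bigcupP[j _ vP].
  by apply/bigcupP; exists j; rewrite // inE; move: (vb j); rewrite vP.
have card_M : #|M| <= #|S|.
  apply: (@leq_trans (\sum_j #|P j :&: S|)).
    rewrite -sum1_card big_mkcond leq_sum // => j _.
    by rewrite inE; case: ifP => // meet; rewrite card_gt0 setI_eq0.
  rewrite -card_bigcup_pairsI subset_leq_card //.
  by apply/bigcupsP=> j _; apply: subsetIr.
apply: leq_trans (subset_leq_card blocked_sub) _.
rewrite cardsU (leq_trans (leq_subr _ _)) // leq_add2l.
apply: leq_trans (card_bigcup_le _ _) _.
by rewrite (eq_bigr _ (fun j _ => card_pair j)) sum_nat_const mulnC leq_mul2l card_M orbT.
Qed.

End PairSwitching.

(* x, x1, x2 stand for the numbers of k-sets containing a fixed d-, (d+1)- and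
   (d+2)-set; once N >= 2d + 2, both N x1 and N q x2 are O(x). *)
Lemma deficit_bound_arith (N k d q u x x1 x2 deg : nat) :
  d < k -> u <= 3 -> 2 * q <= N ->
  (N - d) * x1 = (k - d) * x -> (N - d.+1) * x2 = (k - d.+1) * x1 ->
  x <= 2 * deg + (u + 2 * d) * x1 + q * x2 ->
  N * x <= 2 * N * deg + 2 * (k - d) * (k + d + 2) * x.
Proof.
move=> ltdk le_u le_q E1 E2 le_x.
have [small | large] := ltnP N (2 * d + 2).
  by rewrite addnC (leq_trans _ (leq_addr _ _)) // leq_mul2r; apply/orP; right; nia.
have le_x1 : N * x1 <= 2 * (k - d) * x.
  by rewrite -mulnA -E1 mulnA leq_mul2r; apply/orP; right; lia.
have le_q2 : N * q <= 2 * ((N - d) * (N - d.+1)) by nia.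
have le_x2 : N * (q * x2) <= 2 * (k - d) * (k - d.+1) * x.
  rewrite mulnA (leq_trans (leq_mul le_q2 (leqnn x2))) //.
  by rewrite -!mulnA E2 [(N - d) * _]mulnCA E1 !mulnA [2 * _ * _]mulnAC.
have le_x1' : N * ((u + 2 * d) * x1) <= (3 + 2 * d) * (2 * (k - d) * x).
  by rewrite mulnCA leq_mul // leq_add2r.
have E : (3 + 2 * d) * (2 * (k - d) * x) + 2 * (k - d) * (k - d.+1) * x
          = 2 * (k - d) * (k + d + 2) * x.
  rewrite [(3 + 2 * d) * _]mulnC [2 * (k - d) * (k - d.+1) * x]mulnAC.
  by rewrite [RHS]mulnAC -mulnDr; congr (_ * _); lia.
apply: leq_trans (leq_mul (leqnn N) le_x) _.
rewrite mulnDr mulnDr mulnCA mulnA -addnA leq_add2l -E.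
exact: leq_add.
Qed.

Section HalvingPairs.
Variables (N q : nat).
Hypothesis le_q : 2 * q <= N.
Implicit Types i j : 'I_q.

Definition halving_pair (j : 'I_q) : {set 'I_N} := [set v : 'I_N | v./2 == j].

Definition odd_halves : {set 'I_N} := [set v : 'I_N | odd v && (v./2 < q)].

Lemma halving_pairE j : exists x y : 'I_N,
  [/\ val x = 2 * j, val y = (2 * j).+1 & halving_pair j = [set x; y]].
Proof.
have lt_y : (2 * j).+1 < N by have := ltn_ord j; lia.
exists (Ordinal (ltnW lt_y)), (Ordinal lt_y); split => //.
apply/setP=> v; rewrite !inE -!val_eqE /= -divn2.
by apply/eqP/orP => [<- | [] /eqP ->]; lia.
Qed.

Lemma card_halving_pair j : #|halving_pair j| = 2.
Proof.
have [x [y [vx vy ->]]] := halving_pairE j.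
by rewrite cards2 -val_eqE vx vy /= (ltn_eqF (ltnSn _)).
Qed.

Lemma card_halving_pairI j : #|halving_pair j :&: odd_halves| = 1.
Proof.
have [x [y [vx vy ->]]] := halving_pairE j.
rewrite -(cards1 y); apply: eq_card => v; rewrite !inE.
case: (eqVneq v y) => [-> | _].
  by rewrite orbT vy /= mul2n uphalf_double odd_double ltn_ord.
by rewrite orbF; case: (eqVneq v x) => //= ->; rewrite vx oddM.
Qed.

Lemma halving_pairs_disjoint i j : i != j -> [disjoint halving_pair i & halving_pair j].
Proof.
move=> ij; rewrite -setI_eq0; apply/eqP/setP=> v; rewrite !inE.
by apply: contraNF ij => /andP[/eqP vi /eqP vj]; rewrite -val_eqE /= -vi -vj.
Qed.

Lemma odd_halves_sub : odd_halves \subset \bigcup_j halving_pair j.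
Proof.
apply/subsetP=> v; rewrite inE => /andP[_ lt_v].
by apply/bigcupP; exists (Ordinal lt_v); rewrite ?inE.
Qed.

End HalvingPairs.

Lemma odd_halves_deficit (N k : nat) (S : {set 'I_N}) : #|S| < k ->
  N * #|supsets k S| <=
  2 * N * hdeg (odd_hypergraph k (odd_halves N (2 * (N %/ 4)))) S
  + 2 * (k - #|S|) * (k + #|S| + 2) * #|supsets k S|.
Proof.
move=> ltSk; set q := 2 * (N %/ 4); have le_q : 2 * q <= N by lia.
have pair2 := card_halving_pair le_q; have pairI := card_halving_pairI le_q.
have disj := @halving_pairs_disjoint N q.
set u := #|~: \bigcup_(j : 'I_q) halving_pair N j|.
have le_u : u <= 3.
  have := cardsC (\bigcup_(j : 'I_q) halving_pair N j).
  by rewrite card_cover_pairs // !card_ord; lia.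
have le_blocked := card_blocked S pair2 disj.
have le_stuck := card_unswitchable pair2 ltSk.
have le_switch := card_supsets_switch S pair2 disj pairI k.
rewrite card_supsets card_ord in le_switch *; rewrite card_ord in le_stuck.
apply: (deficit_bound_arith ltSk le_u le_q (nsupsetsS _ _ _) (nsupsetsS _ _ _)).
apply: leq_trans le_switch _; rewrite -addnA leq_add2l.
apply: leq_trans le_stuck _.
by rewrite card_ord leq_add2r leq_mul2r le_blocked orbT.
Qed.

Open Scope R_scope.

Lemma is_lim_seq_div_INR (r : R) : is_lim_seq (fun N => r / (2 * INR N)) 0.
Proof.
have inv_N : is_lim_seq (fun N => / INR N) 0.
  by have := is_lim_seq_inv _ _ is_lim_seq_INR ltac:(discriminate).
have := is_lim_seq_scal_l _ (r / 2) _ inv_N.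
rewrite /= Rmult_0_r; apply: is_lim_seq_ext => N /=.
by rewrite /Rdiv Rinv_mult Rmult_assoc.
Qed.

Lemma deficit_real_bound (N c x deg : nat) : (0 < N)%N ->
  (N * x <= 2 * N * deg + c * x)%N ->
  (1 / 2 - INR c / (2 * INR N)) * INR x <= INR deg.
Proof.
move=> /ltP/lt_0_INR N_pos /leP/le_INR; rewrite !plus_INR !mult_INR => le_x.
have two : INR 2 = 2 by rewrite /=; lra.
apply: (Rmult_le_reg_l (2 * INR N)); first lra.
have -> : 2 * INR N * ((1 / 2 - INR c / (2 * INR N)) * INR x)
          = INR N * INR x - INR c * INR x by field; lra.
by rewrite two in le_x; lra.
Qed.

Theorem theorem3p3 (k d : nat) (hd : (1 <= d)%nat) (hdk : (d < k)%nat) :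
  exists f : nat -> R,
    is_lim_seq (fun N => f N) 0 /\
    forall n : nat, (0 < n)%nat -> ~~ odd n ->
      let N := ((k - 1) * n - k + 2)%nat in
      exists H : {set {set 'I_N}},
        uniform k H /\
        (forall S : {set 'I_N}, #|S| = d ->
           ((1 / 2 - f N) * INR 'C(N - d, k - d) <= INR (hdeg H S))%R) /\
        (forall T : {set {set 'I_n}},
           is_tree T -> (forall x : 'I_n, odd (gdeg T x)) ->
           ~ contains (expansion k T) H).
Proof.
set c := (2 * (k - d) * (k + d + 2))%N.
exists (fun N => INR c / (2 * INR N)); split; first exact: is_lim_seq_div_INR.
move=> n n_pos n_even N.
have n_gt1 : (1 < n)%N by case: n n_pos n_even {N} => [|[|]].
have N_def : N = (n + (n - 1) * (k - 2))%N by apply: expansion_order; lia.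
set A := odd_halves N (2 * (N %/ 4)).
exists (odd_hypergraph k A); split; [|split].
- by move=> e; rewrite inE => /andP[/eqP].
- move=> S cardS.
  have -> : 'C(N - d, k - d) = #|supsets k S|.
    by rewrite card_supsets card_ord cardS /nsupsets (ltnW hdk).
  apply: deficit_real_bound; first lia.
  by rewrite /c -cardS; apply: odd_halves_deficit; rewrite cardS.
- move=> T [_ [_ cardT]] odd_deg; apply: expansion_not_contained => //.
  + by rewrite cardT card_ord oddB ?(ltnW n_gt1) // addbT.
  + have le_q : (2 * (2 * (N %/ 4)) <= N)%N by lia.
    have disj := @halving_pairs_disjoint N (2 * (N %/ 4)).
    rewrite (card_pairs_transversal disj (card_halving_pairI le_q)) ?odd_halves_sub //.
    by rewrite card_ord oddM.
  + by rewrite !card_ord cardT card_ord -N_def.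
Qed.
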